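(* Let $d\ge2$, $0<\gamma<1$, and let $D\subset\mathbb{R}^d$ be a $C^{1+\gamma}$ domain with defining function $\Phi$. If $\delta>0$ satisfies $$\delta^\gamma\frac{\|\nabla\Phi\|_\gamma}{|\nabla\Phi|_{\inf}}\le\frac12,$$ then for each $x\in\partial D$, the set $\partial D\cap B(x,\delta)$ is, after a rotation around $x$, the graph of a $C^{1+\gamma}$ function (of $d-1$ variables), and $D\cap B(x,\delta)$ is the part of $B(x,\delta)$ lying below this graph.
   Context: A defining function is $\Phi\in C^{1+\gamma}(\mathbb{R}^d)$ with $D=\{\Phi<0\}$, $\partial D=\{\Phi=0\}$ and $\nabla\Phi\ne0$ on $\partial D$. $|\nabla\Phi|_{\inf}=\inf_{x\in\partial D}|\nabla\Phi(x)|$ and $\|\nabla\Phi\|_\gamma=\sup_{x_1\ne x_2}|\nabla\Phi(x_1)-\nabla\Phi(x_2)|/|x_1-x_2|^\gamma$. *)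

From HB Require Import structures.
From mathcomp Require Import all_boot all_order all_algebra.
From mathcomp Require Import all_classical all_reals all_analysis.
Set Implicit Arguments. Unset Strict Implicit. Unset Printing Implicit Defensive.
Import Order.TTheory GRing.Theory Num.Theory.
Import numFieldNormedType.Exports.
Local Open Scope classical_set_scope.
Local Open Scope ring_scope.

Definition enorm (R : realType) (k : nat) (v : 'rV[R]_k) : R :=
  Num.sqrt (\sum_(i < k) v ord0 i ^+ 2).

Definition grad (R : realType) (k : nat) (f : 'rV[R]_k -> R) (x : 'rV[R]_k)
  : 'rV[R]_k :=
  \row_(i < k) ('D_(delta_mx 0 i) f x).

Definition C1gamma_on (R : realType) (k : nat) (U : set 'rV[R]_k) (gamma : R)
  (f : 'rV[R]_k -> R) : Prop :=
  (forall x, U x -> differentiable f x) /\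
  exists H : R, forall x1 x2, U x1 -> U x2 ->
    enorm (grad f x1 - grad f x2) <= H * (enorm (x1 - x2)) `^ gamma.

Definition holder_semi (R : realType) (k : nat) (gamma : R)
  (f : 'rV[R]_k -> R) : R :=
  sup [set r | exists x1 x2 : 'rV[R]_k, x1 != x2 /\
         r = enorm (grad f x1 - grad f x2) / (enorm (x1 - x2)) `^ gamma].

(* |grad Phi|_inf = inf_{x in boundary D} |grad Phi(x)|, with boundary D = {Phi = 0} *)
Definition grad_inf (R : realType) (k : nat) (f : 'rV[R]_k -> R) : R :=
  inf [set r | exists x : 'rV[R]_k, f x = 0 /\ r = enorm (grad f x)].

From HB Require Import structures.
From mathcomp Require Import all_boot all_order all_algebra.
From mathcomp Require Import all_classical all_reals all_analysis.
From mathcomp Require Import ring lra.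
Import Order.TTheory GRing.Theory Num.Theory.
Import numFieldNormedType.Exports.
Local Open Scope classical_set_scope.
Local Open Scope ring_scope.
Set Implicit Arguments. Unset Strict Implicit. Unset Printing Implicit Defensive.

(* Rotate so that the first axis points along grad Phi(x) and let
   g = |grad Phi(x)| >= |grad Phi|_inf.  The condition on delta and the Hoelder
   bound give |grad Phi(y) - grad Phi(x)| <= g/2 on B(x, delta), so by the mean
   value theorem Phi(y2) - Phi(y1) is g times the vertical increment up to an
   error at most g/2 |y2 - y1|.  Hence Phi increases with slope >= g/2 along
   vertical lines, and two zeros satisfy |t2 - t1| <= |z2 - z1|.  The graph
   function takes the zero on each vertical line; its domain is open by the
   intermediate value theorem, linearizing Phi at a zero gives its gradient
   -d_z Phi / d_t Phi, and this quotient is Hoelder because d_t Phi >= g/2 and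
   z |-> (f z, z) is 2-Lipschitz. *)

Section EuclideanNorm.
Variables (R : realType) (k : nat).
Implicit Types (u v w : 'rV[R]_k).

Definition dot u v : R := (u *m v^T) 0 0.

Lemma dotE u v : dot u v = \sum_(i < k) u 0 i * v 0 i.
Proof. by rewrite /dot mxE; apply: eq_bigr => i _; rewrite mxE. Qed.

Lemma dotC u v : dot u v = dot v u.
Proof. by rewrite !dotE; apply: eq_bigr => i _; rewrite mulrC. Qed.

Lemma dotDl u v w : dot (u + v) w = dot u w + dot v w.
Proof. by rewrite /dot mulmxDl mxE. Qed.

Lemma dotDr u v w : dot w (u + v) = dot w u + dot w v.
Proof. by rewrite !(dotC w) dotDl. Qed.

Lemma dotNl u v : dot (- u) v = - dot u v.
Proof. by rewrite /dot mulNmx mxE. Qed.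

Lemma dotNr u v : dot u (- v) = - dot u v.
Proof. by rewrite !(dotC u) dotNl. Qed.

Lemma dotBl u v w : dot (u - v) w = dot u w - dot v w.
Proof. by rewrite dotDl dotNl. Qed.

Lemma dotBr u v w : dot w (u - v) = dot w u - dot w v.
Proof. by rewrite dotDr dotNr. Qed.

Lemma dotZl (c : R) u v : dot (c *: u) v = c * dot u v.
Proof. by rewrite /dot -scalemxAl mxE. Qed.

Lemma dotZr (c : R) u v : dot u (c *: v) = c * dot u v.
Proof. by rewrite !(dotC u) dotZl. Qed.

Lemma dot0l v : dot 0 v = 0.
Proof. by rewrite /dot mul0mx mxE. Qed.

Lemma mulmx_tr_dot u v : u *m v^T = (dot u v)%:M.
Proof. by apply/matrixP => i j; rewrite !ord1 [RHS]mxE eqxx mulr1n. Qed.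

Lemma dot_orthomx (Q : 'M[R]_k) u v :
  Q *m Q^T = 1%:M -> dot (u *m Q) (v *m Q) = dot u v.
Proof. by move=> hQ; rewrite /dot trmx_mul mulmxA -(mulmxA u) hQ mulmx1. Qed.

Lemma dot_mulmxr (Q : 'M[R]_k) u v : dot u (v *m Q) = dot (u *m Q^T) v.
Proof. by rewrite /dot trmx_mul mulmxA. Qed.

Lemma dot_delta_mx v i : dot v (delta_mx 0 i) = v 0 i.
Proof.
rewrite dotE (bigD1 i) //= big1 ?addr0 => [|j hj]; rewrite mxE.
  by rewrite !eqxx mulr1.
by rewrite (negbTE hj) andbF mulr0.
Qed.

Lemma dot_ge0 v : 0 <= dot v v.
Proof. by rewrite dotE sumr_ge0 // => i _; rewrite -expr2 sqr_ge0. Qed.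

Lemma dot_eq0 v : dot v v = 0 -> v = 0.
Proof.
rewrite dotE => h; apply/rowP => i; rewrite mxE.
have : v 0 i * v 0 i = 0 by apply: (psumr_eq0P _ h) => // j _; rewrite -expr2 sqr_ge0.
by move/eqP; rewrite mulf_eq0 orbb => /eqP.
Qed.

Lemma enormE v : enorm v = Num.sqrt (dot v v).
Proof. by rewrite /enorm dotE; congr Num.sqrt; apply: eq_bigr => i _; rewrite expr2. Qed.

Lemma enorm_ge0 v : 0 <= enorm v.
Proof. by rewrite enormE sqrtr_ge0. Qed.

Lemma enorm_sq v : enorm v ^+ 2 = dot v v.
Proof. by rewrite enormE sqr_sqrtr // dot_ge0. Qed.

Lemma ler_abs_enorm (t : R) v : (`|t| <= enorm v) = (t ^+ 2 <= dot v v).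
Proof. by rewrite -sqrtr_sqr enormE ler_sqrt // dot_ge0. Qed.

Lemma enorm0 : enorm (0 : 'rV[R]_k) = 0.
Proof. by rewrite enormE dot0l sqrtr0. Qed.

Lemma enorm_gt0 v : v != 0 -> 0 < enorm v.
Proof.
move=> hv; rewrite lt_neqAle enorm_ge0 andbT; apply: contra hv => /eqP h.
by apply/eqP/dot_eq0; rewrite -enorm_sq -h expr0n.
Qed.

Lemma enormN v : enorm (- v) = enorm v.
Proof. by rewrite !enormE dotNl dotNr opprK. Qed.

Lemma enormZ (c : R) v : enorm (c *: v) = `|c| * enorm v.
Proof.
by rewrite !enormE dotZl dotZr mulrA sqrtrM ?sqr_ge0 // -expr2 sqrtr_sqr.
Qed.

Lemma enorm_orthomx (Q : 'M[R]_k) v : Q *m Q^T = 1%:M -> enorm (v *m Q) = enorm v.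
Proof. by move=> hQ; rewrite !enormE dot_orthomx. Qed.

Lemma dot_le_enorm u v : dot u v <= enorm u * enorm v.
Proof.
have [u0|/enorm_gt0 hA] := eqVneq u 0; first by rewrite u0 dot0l enorm0 mul0r.
have [v0|/enorm_gt0 hB] := eqVneq v 0; first by rewrite v0 dotC dot0l enorm0 mulr0.
set A := enorm u in hA *; set B := enorm v in hB *.
have key : 2 * A * B * dot u v <= B ^+ 2 * dot u u + A ^+ 2 * dot v v.
  rewrite !dotE !mulr_sumr -big_split /=; apply: ler_sum => i _.
  by have := sqr_ge0 (B * u 0 i - A * v 0 i); nra.
rewrite -!enorm_sq -/A -/B in key.
by rewrite -(ler_pM2l (mulr_gt0 hA hB)); nra.
Qed.

Lemma cauchy_schwarz u v : `|dot u v| <= enorm u * enorm v.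
Proof.
have := dot_le_enorm u v; have := dot_le_enorm u (- v).
by rewrite dotNr enormN => h1 h2; rewrite ler_norml h2 andbT; lra.
Qed.

Lemma enormD u v : enorm (u + v) <= enorm u + enorm v.
Proof.
rewrite enormE -(ger0_norm (addr_ge0 (enorm_ge0 u) (enorm_ge0 v))) -sqrtr_sqr.
rewrite ler_sqrt ?sqr_ge0 // dotDl !dotDr sqrrD !enorm_sq (dotC v u).
by have := dot_le_enorm u v; lra.
Qed.

Lemma abs_coord_le_enorm v i : `|v 0 i| <= enorm v.
Proof.
rewrite ler_abs_enorm dotE (bigD1 i) //= -expr2 lerDl sumr_ge0 // => j _.
by rewrite -expr2 sqr_ge0.
Qed.

Lemma mx_norm_le_enorm v : `|v| <= enorm v.
Proof.
rewrite (_ : `|v| = mx_norm v) // mx_normrE.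
apply: bigmax_le => [|[i j] _ /=]; first exact: enorm_ge0.
by rewrite ord1; apply: abs_coord_le_enorm.
Qed.

Lemma enorm_le_mx_norm v : enorm v <= k%:R * `|v|.
Proof.
have hc i : `|v 0 i| <= `|v|.
  rewrite (_ : `|v| = mx_norm v) // mx_normrE.
  exact: (le_bigmax _ (fun ij : 'I_1 * 'I_k => `|v ij.1 ij.2|) (ord0, i)).
rewrite -(ger0_norm (enorm_ge0 v)) -(ger0_norm (mulr_ge0 (ler0n _ k) (normr_ge0 v))).
rewrite -ler_sqr ?nnegrE // !real_normK ?num_real // enorm_sq dotE.
apply: (@le_trans _ _ (\sum_(i < k) `|v| ^+ 2)).
  apply: ler_sum => i _; rewrite -expr2 -real_normK ?num_real //.
  by rewrite lerXn2r ?nnegrE ?normr_ge0.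
rewrite sumr_const card_ord -[_ *+ k]mulr_natr exprMn [X in _ <= X]mulrC.
rewrite ler_wpM2l ?sqr_ge0 // -natrX ler_nat; case: (k) => // k'.
by rewrite expnS leq_pmulr // expn_gt0.
Qed.

End EuclideanNorm.

Lemma ler_enorm (R : realType) k1 k2 (u : 'rV[R]_k1) (v : 'rV[R]_k2) :
  (enorm u <= enorm v) = (dot u u <= dot v v).
Proof. by rewrite !enormE ler_sqrt // dot_ge0. Qed.

Section VerticalCoordinates.
Variables (R : realType) (n : nat).
Implicit Types (t s : R) (z w : 'rV[R]_n).

(* [t] is the coordinate along the normal, [z] the coordinates in the tangent
   hyperplane. *)
Definition vpt t z : 'rV[R]_(1 + n) := row_mx (t%:M : 'rV_1) z.

Local Notation e0 := (vpt 1 0).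

Lemma dot_row_mx (a c : 'rV[R]_1) (b d : 'rV[R]_n) :
  dot (row_mx a b) (row_mx c d) = dot a c + dot b d.
Proof. by rewrite /dot tr_row_mx mul_row_col mxE. Qed.

Lemma dot_vpt (a : 'rV[R]_(1 + n)) t z :
  dot a (vpt t z) = lsubmx a 0 0 * t + dot (rsubmx a) z.
Proof.
rewrite -[a]hsubmxK dot_row_mx row_mxKl row_mxKr; congr (_ + _).
by rewrite /dot tr_scalar_mx mul_mx_scalar mxE mulrC.
Qed.

Lemma dot_e0 t z : dot e0 (vpt t z) = t.
Proof. by rewrite dot_vpt /vpt row_mxKl row_mxKr dot0l addr0 mxE mulr1n mul1r. Qed.

Lemma enorm_vpt_sq t z : enorm (vpt t z) ^+ 2 = t ^+ 2 + enorm z ^+ 2.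
Proof. by rewrite !enorm_sq dot_vpt /vpt row_mxKl row_mxKr mxE mulr1n expr2. Qed.

Lemma enorm_vpt_le t z : enorm (vpt t z) <= `|t| + enorm z.
Proof.
rewrite enormE -(ger0_norm (addr_ge0 (normr_ge0 t) (enorm_ge0 z))) -sqrtr_sqr.
rewrite ler_sqrt ?sqr_ge0 // -enorm_sq enorm_vpt_sq sqrrD real_normK ?num_real //.
by have := mulr_ge0 (normr_ge0 t) (enorm_ge0 z); lra.
Qed.

Lemma abs_le_enorm_vpt t z : `|t| <= enorm (vpt t z).
Proof. by rewrite ler_abs_enorm -enorm_sq enorm_vpt_sq lerDl sqr_ge0. Qed.

Lemma vptB t z s w : vpt t z - vpt s w = vpt (t - s) (z - w).
Proof. by rewrite /vpt opp_row_mx add_row_mx raddfB. Qed.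

Lemma vptD t z s w : vpt t z + vpt s w = vpt (t + s) (z + w).
Proof. by rewrite /vpt add_row_mx raddfD. Qed.

Lemma vpt_vertical t z : vpt t z = vpt 0 z + t *: e0.
Proof.
by rewrite /vpt scale_row_mx scale_scalar_mx mulr1 scaler0 add_row_mx -raddfD add0r addr0.
Qed.

Lemma enorm_rsubmx (v : 'rV[R]_(1 + n)) : enorm (rsubmx v) <= enorm v.
Proof. by rewrite ler_enorm -{3 4}[v]hsubmxK dot_row_mx lerDr dot_ge0. Qed.

Lemma abs_lsubmx_le_enorm (v : 'rV[R]_(1 + n)) : `|lsubmx v 0 0| <= enorm v.
Proof.
apply: le_trans (abs_coord_le_enorm _ _) _.
by rewrite ler_enorm -{3 4}[v]hsubmxK dot_row_mx lerDl dot_ge0.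
Qed.

End VerticalCoordinates.

Section Rotation.
Variables (R : realType) (n : nat).
Local Notation e0 := (vpt 1 (0 : 'rV[R]_n)).

(* The Householder reflection across the hyperplane orthogonal to [e0 - u]. *)
Lemma orthomx_e0 (u : 'rV[R]_(1 + n)) : dot u u = 1 ->
  exists H : 'M[R]_(1 + n), H *m H^T = 1%:M /\ e0 *m H = u.
Proof.
move=> hu; set w := e0 - u; set s := dot w w.
have he0 : dot e0 e0 = 1 by rewrite dot_e0.
have [s0|sn0] := eqVneq s 0.
  exists 1%:M; rewrite trmx1 !mulmx1; split => //.
  by apply/eqP; rewrite -subr_eq0; apply/eqP/dot_eq0.
set c := 2 / s; set M := w^T *m w.
have hcs : c * s = 2 by rewrite /c divfK.
have hMT : M^T = M by rewrite /M trmx_mul trmxK.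
have hMM : M *m M = s *: M.
  by rewrite /M mulmxA -(mulmxA w^T) mulmx_tr_dot mul_mx_scalar -scalemxAl.
exists (1%:M - c *: M); split.
  rewrite [(_ - _)^T]linearB /= [(c *: M)^T]linearZ /= trmx1 hMT.
  rewrite mulmxBl mul1mx mulmxBr mulmx1 -scalemxAl -scalemxAr scalerA hMM scalerA.
  have -> : c * c * s = c + c by rewrite -mulrA hcs /c; field.
  by rewrite scalerDl opprB addrK subrK.
rewrite mulmxBr mulmx1 -scalemxAr /M mulmxA mulmx_tr_dot mul_scalar_mx scalerA.
have hs : s = 2 - 2 * dot e0 u by rewrite /s /w dotBl !dotBr he0 hu (dotC u e0); ring.
have -> : c * dot e0 w = 1.
  rewrite /w dotBr he0 /c hs; field.
  by apply: contra sn0 => /eqP h; rewrite hs h.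
by rewrite scale1r /w opprB addrC subrK.
Qed.

Lemma det_orthomx (H : 'M[R]_(1 + n)) : H *m H^T = 1%:M -> \det H = 1 \/ \det H = -1.
Proof.
move=> hH; have : \det H ^+ 2 = 1 by rewrite expr2 -{2}det_tr -det_mulmx hH det1.
by move/eqP; rewrite sqrf_eq1 => /orP [] /eqP; [left|right].
Qed.

(* A reflection fixing [e0] corrects the sign of the determinant; it needs a
   second coordinate, whence [1 <= n]. *)
Lemma rotation_e0 (u : 'rV[R]_(1 + n)) : (1 <= n)%N -> dot u u = 1 ->
  exists Q : 'M[R]_(1 + n), Q *m Q^T = 1%:M /\ \det Q = 1 /\ e0 *m Q = u.
Proof.
move=> hn hu; have [H [hH he]] := orthomx_e0 hu.
have [d1|dm1] := det_orthomx hH; first by exists H.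
pose j1 : 'I_(1 + n) := rshift 1 (Ordinal hn).
pose D := diag_mx (\row_i (if i == j1 then -1 else 1) : 'rV[R]_(1 + n)).
have hDD : D *m D^T = 1%:M.
  rewrite /D tr_diag_mx mulmx_diag -diag_const_mx; congr diag_mx.
  by apply/rowP => i; rewrite !mxE; case: ifP => _; rewrite ?mulrNN mulr1.
have hdet : \det D = -1.
  rewrite /D det_diag (bigD1 j1) //= big1 ?mulr1; first by rewrite mxE eqxx.
  by move=> i /negbTE hi; rewrite mxE hi.
have he0 : e0 *m D = e0.
  apply/rowP => j; rewrite /D mul_mx_diag mxE [X in _ * X]mxE.
  case: (eqVneq j j1) => [->|hj]; last by rewrite mulr1.
  by rewrite /j1 /vpt row_mxEr mxE mul0r.
exists (D *m H); split; last split.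
- by rewrite trmx_mul mulmxA -(mulmxA D) hH mulmx1 hDD.
- by rewrite det_mulmx hdet dm1 mulrNN mulr1.
- by rewrite mulmxA he0.
Qed.

End Rotation.

Section DifferentiableAlongLines.
Variables (R : realType) (k : nat) (Phi : 'rV[R]_k -> R).
Hypothesis Phi_diff : forall y, differentiable Phi y.

Lemma diff_dot_grad y v : 'd Phi y v = dot (grad Phi y) v.
Proof.
rewrite {1}(row_sum_delta v) linear_sum dotE; apply: eq_bigr => i _.
by rewrite linearZ /= -deriveE // /grad mxE mulrC.
Qed.

Let line_quotientE (y w : 'rV[R]_k) (s : R) :
  (fun h : R => h^-1 *: (((fun s : R => Phi (y + s *: w)) \o shift s) (h *: 1)
      - (fun s : R => Phi (y + s *: w)) s)) =
  (fun h : R => h^-1 *: ((Phi \o shift (y + s *: w)) (h *: w) - Phi (y + s *: w))).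
Proof.
apply: funext => h /=; congr (_ *: (Phi _ - _)).
by rewrite [h *: 1]mulr1 scalerDl addrCA addrC.
Qed.

Lemma derivable_line (y w : 'rV[R]_k) (s : R) :
  derivable (fun s : R => Phi (y + s *: w)) s 1.
Proof. by rewrite /derivable line_quotientE; apply: diff_derivable. Qed.

Lemma derive_line (y w : 'rV[R]_k) (s : R) :
  'D_1 (fun s : R => Phi (y + s *: w)) s = dot (grad Phi (y + s *: w)) w.
Proof. by rewrite /derive line_quotientE -/(derive _ _ _) deriveE // diff_dot_grad. Qed.

Lemma continuous_line (y w : 'rV[R]_k) (a b : R) :
  {within `[a, b], continuous (fun s : R => Phi (y + s *: w))}.
Proof. by apply: derivable_within_continuous => s _; exact: derivable_line. Qed.

Lemma mvt_segment_grad (y w : 'rV[R]_k) :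
  exists2 c : R, 0 <= c <= 1 & Phi (y + w) - Phi y = dot (grad Phi (y + c *: w)) w.
Proof.
have [s _||c] := @MVT_segment R (fun s : R => Phi (y + s *: w))
    (fun c : R => dot (grad Phi (y + c *: w)) w) 0 1 ler01.
- by apply: DeriveDef; [exact: derivable_line | exact: derive_line].
- exact: continuous_line.
rewrite in_itv /= scale1r scale0r addr0 subr0 mulr1 => hc ->.
by exists c.
Qed.

End DifferentiableAlongLines.

Lemma differentiable_approx (K : numFieldType) (V W : normedModType K) (f : V -> W)
  (df : {linear V -> W}) x : continuous df ->
  (forall eps : K, 0 < eps ->
     \forall h \near 0, `|f (h + x) - (f x + df h)| <= eps * `|h|) ->
  differentiable f x /\ 'd f x = df :> (V -> W).
Proof.
move=> dfc happrox.
have hdf : f \o shift x = cst (f x) + df +o_ 0 id by apply/eqaddoP.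
have hdu := diff_unique dfc hdf; split => //.
by apply/diff_locallyP; rewrite hdu.
Qed.

Section HolderSeminorm.
Variables (R : realType) (k : nat) (gamma : R) (Phi : 'rV[R]_k -> R) (H : R).
Hypothesis Phi_holder : forall x1 x2,
  enorm (grad Phi x1 - grad Phi x2) <= H * enorm (x1 - x2) `^ gamma.

Let holder_quotients := [set r | exists x1 x2 : 'rV[R]_k, x1 != x2 /\
  r = enorm (grad Phi x1 - grad Phi x2) / enorm (x1 - x2) `^ gamma].

Let holder_quotients_ub : has_ubound holder_quotients.
Proof.
exists H => r [x1 [x2 [hne ->]]].
by rewrite ler_pdivrMr // powR_gt0 // enorm_gt0 // subr_eq0.
Qed.

Lemma holder_semi_ge0 : (0 < k)%N -> 0 <= holder_semi gamma Phi.
Proof.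
move=> hk; pose e : 'rV[R]_k := delta_mx 0 (Ordinal hk).
have he : e != 0.
  by apply/eqP => /rowP /(_ (Ordinal hk)); rewrite !mxE !eqxx => /eqP; rewrite oner_eq0.
apply: le_trans (ub_le_sup holder_quotients_ub _); last first.
  by exists e, 0; split; [exact: he | reflexivity].
by rewrite divr_ge0 ?enorm_ge0 ?powR_ge0.
Qed.

Lemma holder_semi_bound x1 x2 : (0 < k)%N ->
  enorm (grad Phi x1 - grad Phi x2) <= holder_semi gamma Phi * enorm (x1 - x2) `^ gamma.
Proof.
move=> hk; have [->|hne] := eqVneq x1 x2.
  by rewrite subrr enorm0 mulr_ge0 ?holder_semi_ge0 ?powR_ge0.
rewrite -ler_pdivrMr ?powR_gt0 ?enorm_gt0 ?subr_eq0 //.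
by apply: ub_le_sup; [exact: holder_quotients_ub | exists x1, x2].
Qed.

End HolderSeminorm.

Lemma grad_inf_le (R : realType) k (Phi : 'rV[R]_k -> R) y :
  Phi y = 0 -> grad_inf Phi <= enorm (grad Phi y).
Proof.
move=> Phi_y; apply: ge_inf; last by exists y.
by exists 0 => r [z [_ ->]]; exact: enorm_ge0.
Qed.

(* Bounds the variation of [v / A] through
   [v1 / A - v2 / B = (v1 - v2) / A + (B - A) / (A B) v2]. *)
Lemma ratio_variation_bound (R : realType) (g A B m q D : R) :
  0 < g -> g / 2 <= A -> g / 2 <= B -> 0 <= m <= D -> `|B - A| <= D ->
  0 <= q <= 3 / 2 * g ->
  `|A^-1| * m + `|(B - A) / (A * B)| * q <= 8 / g * D.
Proof.
move=> g_gt0 gA gB /andP [m_ge0 mD] BAD /andP [q_ge0 qg].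
have inv_le a : g / 2 <= a -> 0 <= a^-1 <= 2 / g.
  move=> ga; have a_gt0 : 0 < a by apply: lt_le_trans ga; rewrite divr_gt0.
  by rewrite invr_ge0 ltW //= -invf_div lef_pV2 ?posrE ?divr_gt0.
have /andP [iA0 iA] := inv_le A gA; have /andP [iB0 iB] := inv_le B gB.
have A_gt0 : 0 < A by apply: lt_le_trans gA; rewrite divr_gt0.
have B_gt0 : 0 < B by apply: lt_le_trans gB; rewrite divr_gt0.
rewrite normrM !normfV normrM (gtr0_norm A_gt0) (gtr0_norm B_gt0) invfM.
have -> : 8 / g * D = 2 / g * D + D * (2 / g * (2 / g)) * (3 / 2 * g).
  by field; rewrite gt_eqF.
apply: lerD; first exact: ler_pM.
have iAB : A^-1 * B^-1 <= 2 / g * (2 / g) by apply: ler_pM.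
by apply: ler_pM; rewrite ?mulr_ge0 //; apply: ler_pM; rewrite ?mulr_ge0.
Qed.

Section LocalGraph.
Variables (R : realType) (n : nat) (gamma : R) (Phi : 'rV[R]_(1 + n) -> R) (H : R).
Hypothesis gamma_gt0 : 0 < gamma.
Hypothesis Phi_diff : forall y, differentiable Phi y.
Hypothesis Phi_holder : forall x1 x2,
  enorm (grad Phi x1 - grad Phi x2) <= H * enorm (x1 - x2) `^ gamma.
Variables (x : 'rV[R]_(1 + n)) (delta : R).
Hypothesis Phi_x : Phi x = 0.
Hypothesis delta_gt0 : 0 < delta.
Hypothesis grad_inf_gt0 : 0 < grad_inf Phi.
Hypothesis delta_small : delta `^ gamma * (holder_semi gamma Phi / grad_inf Phi) <= 1 / 2.

Local Notation S := (holder_semi gamma Phi).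
Let G := grad Phi x.
Let g := enorm G.

Let S_ge0 : 0 <= S.
Proof. exact: holder_semi_ge0 Phi_holder _. Qed.

Let S_bound y1 y2 : enorm (grad Phi y1 - grad Phi y2) <= S * enorm (y1 - y2) `^ gamma.
Proof. exact: holder_semi_bound Phi_holder _ _ _. Qed.

Lemma grad_norm_gt0 : 0 < g.
Proof. exact: lt_le_trans grad_inf_gt0 (grad_inf_le Phi_x). Qed.

Lemma grad_near_center y : enorm (y - x) < delta -> enorm (grad Phi y - G) <= g / 2.
Proof.
move=> y_near; apply: le_trans (S_bound y x) _.
have : delta `^ gamma * S <= g / 2.
  apply: le_trans (_ : _ <= grad_inf Phi / 2) _; last by rewrite ler_pM2r // grad_inf_le.
  move: delta_small; rewrite mulrA ler_pdivrMr // => h.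
  by apply: le_trans h _; rewrite mul1r mulrC.
apply: le_trans; rewrite mulrC ler_wpM2r //.
by apply: ge0_ler_powR; rewrite ?nnegrE ?enorm_ge0 ?ltW.
Qed.

Lemma grad_norm_near_center y : enorm (y - x) < delta -> enorm (grad Phi y) <= 3 / 2 * g.
Proof.
move=> /grad_near_center h; rewrite -[grad Phi y](subrK G).
by apply: le_trans (enormD _ _) _; rewrite -/g; lra.
Qed.

Lemma Phi_linear_approx y1 y2 : enorm (y1 - x) < delta -> enorm (y2 - x) < delta ->
  `|Phi y2 - Phi y1 - dot G (y2 - y1)| <= g / 2 * enorm (y2 - y1).
Proof.
move=> y1_near y2_near.
have [c /andP [c_ge0 c_le1]] := mvt_segment_grad Phi_diff y1 (y2 - y1).
rewrite [y1 + _]addrC subrK => ->; rewrite -dotBl.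
apply: le_trans (cauchy_schwarz _ _) _; rewrite ler_wpM2r ?enorm_ge0 //.
apply: grad_near_center.
have -> : y1 + c *: (y2 - y1) - x = (1 - c) *: (y1 - x) + c *: (y2 - x).
  by apply/rowP => i; rewrite !mxE; ring.
apply: le_lt_trans (enormD _ _) _.
rewrite !enormZ (ger0_norm c_ge0) ger0_norm ?subr_ge0 //.
have [->|c_neq0] := eqVneq c 0; first by rewrite subr0 mul1r mul0r addr0.
have : 0 < c by rewrite lt_neqAle eq_sym c_neq0.
nra.
Qed.

Variable Q : 'M[R]_(1 + n).
Hypothesis Q_orth : Q *m Q^T = 1%:M.
Hypothesis Q_e0 : vpt 1 0 *m Q = g^-1 *: G.

Lemma grad_center_e0 : G = g *: (vpt 1 0 *m Q).
Proof. by rewrite Q_e0 scalerA divff ?scale1r // gt_eqF // grad_norm_gt0. Qed.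

Definition Psi t z := Phi (x + vpt t z *m Q).
Definition in_ball t (z : 'rV[R]_n) := enorm (vpt t z) < delta.

Lemma Psi_approx t1 z1 t2 z2 : in_ball t1 z1 -> in_ball t2 z2 ->
  `|Psi t2 z2 - Psi t1 z1 - g * (t2 - t1)| <= g / 2 * (`|t2 - t1| + enorm (z2 - z1)).
Proof.
move=> in1 in2.
have pt_near t z : enorm ((x + vpt t z *m Q) - x) = enorm (vpt t z).
  by rewrite addrC addKr enorm_orthomx.
have := Phi_linear_approx (y1 := x + vpt t1 z1 *m Q) (y2 := x + vpt t2 z2 *m Q).
rewrite !pt_near => /(_ in1 in2).
rewrite opprD addrACA subrr add0r -mulmxBl vptB enorm_orthomx //.
rewrite grad_center_e0 dotZl dot_orthomx // dot_e0 => h; apply: le_trans h _.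
by rewrite ler_wpM2l ?enorm_vpt_le // divr_ge0 // ltW // grad_norm_gt0.
Qed.

Lemma Psi_increasing t1 t2 z : in_ball t1 z -> in_ball t2 z -> t1 <= t2 ->
  g / 2 * (t2 - t1) <= Psi t2 z - Psi t1 z.
Proof.
move=> in1 in2 t12; have := Psi_approx in1 in2; rewrite subrr enorm0 addr0.
rewrite [`|t2 - t1|]ger0_norm ?subr_ge0 // ler_norml => /andP [h _].
by have := grad_norm_gt0; nra.
Qed.

Lemma zeros_lipschitz t1 z1 t2 z2 : in_ball t1 z1 -> in_ball t2 z2 ->
  Psi t1 z1 = 0 -> Psi t2 z2 = 0 -> `|t2 - t1| <= enorm (z2 - z1).
Proof.
move=> in1 in2 P1 P2; have := Psi_approx in1 in2.
rewrite P1 P2 subrr sub0r normrN normrM (ger0_norm (ltW grad_norm_gt0)).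
by have := grad_norm_gt0; nra.
Qed.

Lemma in_ball_between a b c z : in_ball a z -> in_ball b z -> a <= c <= b -> in_ball c z.
Proof.
rewrite /in_ball => ina inb /andP [ac cb].
have sq t : enorm (vpt t z) < delta <-> t ^+ 2 + enorm z ^+ 2 < delta ^+ 2.
  by rewrite -enorm_vpt_sq ltr_pXn2r ?nnegrE ?enorm_ge0 ?ltW.
move/sq: ina => ina; move/sq: inb => inb; apply/sq.
by have [c0|c0] := leP 0 c; nra.
Qed.

Lemma Psi_ivt z a b : a <= b -> in_ball a z -> in_ball b z ->
  Psi a z <= 0 -> 0 <= Psi b z -> exists c, in_ball c z /\ Psi c z = 0.
Proof.
move=> ab ina inb Pa Pb.
have Psi_line : (fun s => Psi s z) =
    (fun s => Phi ((x + vpt 0 z *m Q) + s *: (vpt 1 0 *m Q))).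
  by apply: funext => s; rewrite /Psi vpt_vertical mulmxDl -scalemxAl addrA.
have Psi_cont : {within `[a, b], continuous (fun s => Psi s z)}.
  by rewrite Psi_line; apply: continuous_line.
have [|c c_ab Pc] := IVT ab Psi_cont (v := 0); first by rewrite ge_min le_max Pa Pb orbT.
by exists c; split => //; apply: (in_ball_between ina inb); rewrite in_itv /= in c_ab.
Qed.

Definition graph_dom : set 'rV[R]_n := [set z | exists t, in_ball t z /\ Psi t z = 0].

(* Off [graph_dom] the value is out of the ball, above it if [Psi] takes a
   negative value on the vertical line through [z] and below it otherwise. *)
Definition graph (z : 'rV[R]_n) : R :=
  if `[< graph_dom z >] then xget 0 (fun t => in_ball t z /\ Psi t z = 0)
  else if `[< exists t, in_ball t z /\ Psi t z < 0 >] then delta + 1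
  else - (delta + 1).

Lemma graphP z : graph_dom z -> in_ball (graph z) z /\ Psi (graph z) z = 0.
Proof. by move=> hz; rewrite /graph (asboolT hz); exact: (xgetPex 0 hz). Qed.

Lemma Psi_eq0 t z : in_ball t z -> (Psi t z = 0 <-> graph_dom z /\ t = graph z).
Proof.
move=> int; split => [P0|[hz ->]]; last by case: (graphP hz).
have hz : graph_dom z by exists t.
split => //; have [ing Pg] := graphP hz.
by have := zeros_lipschitz int ing P0 Pg; rewrite subrr enorm0 normr_le0 subr_eq0 => /eqP.
Qed.

Lemma Psi_lt0 t z : in_ball t z -> (Psi t z < 0 <-> t < graph z).
Proof.
move=> int; have g_gt0 := grad_norm_gt0.
have t_small : `|t| < delta by apply: le_lt_trans (abs_le_enorm_vpt _ _) int.
have [hz|hz] := pselect (graph_dom z).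
  have [ing Pg] := graphP hz; split => hP.
    rewrite ltNge; apply/negP => le_gt.
    by have := Psi_increasing ing int le_gt; rewrite Pg subr0; nra.
  by have := Psi_increasing int ing (ltW hP); rewrite Pg; nra.
rewrite /graph (asboolF hz).
have [hneg|hneg] := pselect (exists t, in_ball t z /\ Psi t z < 0); last first.
  rewrite (asboolF hneg); split => [hP|]; first by exfalso; apply: hneg; exists t.
  by move: t_small; rewrite ltr_norml; lra.
rewrite (asboolT hneg); split => _; first by move: t_small; rewrite ltr_norml; lra.
rewrite ltNge; apply/negP => P_ge0.
have [P0|P_neq0] := eqVneq (Psi t z) 0; first by apply: hz; exists t.
have {P_ge0 P_neq0}P_gt0 : 0 < Psi t z by rewrite lt_neqAle eq_sym P_neq0.
have [t' [int' Pt']] := hneg.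
have [t't|tt'] := leP t' t.
  have [c hc] := Psi_ivt t't int' int (ltW Pt') (ltW P_gt0).
  by apply: hz; exists c.
by have := Psi_increasing int int' (ltW tt'); nra.
Qed.

Lemma graph_dom_ball z0 : graph_dom z0 ->
  exists2 e, 0 < e & forall z, enorm (z - z0) < e -> graph_dom z.
Proof.
move=> hz0; have [in0 P0] := graphP hz0; set t0 := graph z0 in in0 P0.
set e := (delta - enorm (vpt t0 z0)) / 4.
have e_gt0 : 0 < e by rewrite divr_gt0 // subr_gt0.
exists e => // z hz; have g_gt0 := grad_norm_gt0.
have in_s s : `|s| <= e -> in_ball (t0 + s) z.
  move=> hs; rewrite /in_ball (_ : vpt _ _ = vpt t0 z0 + vpt s (z - z0)).
    apply: le_lt_trans (enormD _ _) _; apply: le_lt_trans (lerD (lexx _) (enorm_vpt_le _ _)) _.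
    by have := in0; rewrite /in_ball /e in hs hz *; lra.
  by rewrite vptD [z0 + _]addrC subrK.
have e_abs : `|e| = e by rewrite ger0_norm ?ltW.
have inp : in_ball (t0 + e) z by apply: in_s; rewrite e_abs.
have inm : in_ball (t0 - e) z by apply: in_s; rewrite normrN e_abs.
have Pp : 0 <= Psi (t0 + e) z.
  have := Psi_approx in0 inp; rewrite P0 subr0 addrAC subrr add0r e_abs.
  by rewrite ler_norml => /andP [h _]; nra.
have Pm : Psi (t0 - e) z <= 0.
  have := Psi_approx in0 inm; rewrite P0 subr0 addrAC subrr add0r normrN e_abs.
  by rewrite ler_norml => /andP [_ h]; nra.
have [|c [inc Pc]] := Psi_ivt _ inm inp Pm Pp; first by lra.
by exists c.
Qed.

Lemma graph_dom_open : open graph_dom.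
Proof.
rewrite openE => z0 /graph_dom_ball [e e_gt0 ball_e]; rewrite /interior -nbhs_nbhs_norm.
have n1_gt0 : 0 < n%:R + 1 :> R by rewrite ltr_wpDl ?ler0n.
exists (e / (n%:R + 1)); first by rewrite /= divr_gt0.
move=> z /= hz; apply: ball_e; apply: le_lt_trans (enorm_le_mx_norm _) _.
rewrite -normrN opprB.
apply: le_lt_trans (_ : n%:R * `|z0 - z| <= (n%:R + 1) * `|z0 - z|) _.
  by rewrite ler_wpM2r ?normr_ge0 // lerDl.
by rewrite mulrC -ltr_pdivlMr.
Qed.

Definition graph_pt z := x + vpt (graph z) z *m Q.
Definition rot_grad z := grad Phi (graph_pt z) *m Q^T.
(* [dvert z] and [dhor z] are the derivatives of [Psi] in [t] and in [z] at
   the point [(graph z, z)]. *)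
Definition dvert z := lsubmx (rot_grad z) 0 0.
Definition dhor z := rsubmx (rot_grad z).
Definition graph_diff z (h : 'rV[R]_n) : R := - dot (dhor z) h / dvert z.

Lemma graph_pt_near z : graph_dom z -> enorm (graph_pt z - x) < delta.
Proof. by move=> /graphP [+ _]; rewrite /graph_pt addrC addKr enorm_orthomx. Qed.

Lemma dvert_ge z : graph_dom z -> g / 2 <= dvert z.
Proof.
move=> hz.
have -> : dvert z = dot (grad Phi (graph_pt z)) (vpt 1 0 *m Q).
  by rewrite dot_mulmxr dot_vpt mulr1 dotC dot0l addr0.
rewrite -[grad Phi _](subrK G) dotDl {2}grad_center_e0 dotZl dot_orthomx // dot_e0 mulr1.
have := cauchy_schwarz (grad Phi (graph_pt z) - G) (vpt 1 0 *m Q).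
rewrite enorm_orthomx // (_ : enorm (vpt 1 0) = 1); last by rewrite enormE dot_e0 sqrtr1.
have := grad_near_center (graph_pt_near hz).
by move: (dot _ _) (enorm _) => d a h1; rewrite mulr1 ler_norml => /andP [h2 _]; lra.
Qed.

Lemma dvert_gt0 z : graph_dom z -> 0 < dvert z.
Proof. by move=> /dvert_ge; apply: lt_le_trans; rewrite divr_gt0 // grad_norm_gt0. Qed.

Lemma diff_Phi_vpt z t h : 'd Phi (graph_pt z) (vpt t h *m Q) = dvert z * t + dot (dhor z) h.
Proof. by rewrite diff_dot_grad // dot_mulmxr dot_vpt. Qed.

Lemma graph_diff_linear z : linear (graph_diff z).
Proof. by move=> a u v; rewrite /graph_diff dotDr dotZr /GRing.scale /=; ring. Qed.

Lemma graph_diff_continuous z : continuous (graph_diff z).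
Proof.
pose L : {linear 'rV[R]_n -> R} :=
  HB.pack (graph_diff z) (GRing.isLinear.Build _ _ _ _ _ (graph_diff_linear z)).
suff : continuous L by [].
apply/linear_bounded_continuous/bounded_funP => r.
exists (enorm (dhor z) * (n%:R * r) / `|dvert z|) => h hh.
rewrite /= /graph_diff normrM normrN normfV ler_wpM2r ?invr_ge0 ?normr_ge0 //.
apply: le_trans (cauchy_schwarz _ _) _; rewrite ler_wpM2l ?enorm_ge0 //.
by apply: le_trans (enorm_le_mx_norm h) _; rewrite ler_wpM2l ?ler0n.
Qed.

Lemma graph_increment_le z h : graph_dom z -> graph_dom (h + z) ->
  `|vpt (graph (h + z) - graph z) h *m Q| <= 2 * (n%:R + 1) * `|h|.
Proof.
move=> /graphP [in0 P0] /graphP [in1 P1].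
have := zeros_lipschitz in0 in1 P0 P1; rewrite addrK => lip.
have hn := enorm_le_mx_norm h; have h_ge0 := normr_ge0 h; have n_ge0 := ler0n R n.
apply: le_trans (mx_norm_le_enorm _) _; rewrite enorm_orthomx //.
by apply: le_trans (enorm_vpt_le _ _) _; nra.
Qed.

(* Since [Phi] vanishes at both endpoints, the error of [graph_diff] is, up to
   the factor [dvert z], the remainder of the first-order expansion of [Phi]. *)
Lemma graph_remainder z h : graph_dom z -> graph_dom (h + z) ->
  let k := vpt (graph (h + z) - graph z) h *m Q in
  dvert z * `|graph (h + z) - (graph z + graph_diff z h)| =
  `|Phi (k + graph_pt z) - (Phi (graph_pt z) + 'd Phi (graph_pt z) k)|.
Proof.
move=> hz hhz k; have [_ P0] := graphP hz; have [_ P1] := graphP hhz.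
have -> : k + graph_pt z = x + vpt (graph (h + z)) (h + z) *m Q.
  by rewrite /k /graph_pt addrCA -mulmxDl vptD subrK.
rewrite -/(Psi _ _) P1 [Phi (graph_pt z)]P0 diff_Phi_vpt sub0r add0r normrN.
rewrite -{1}(gtr0_norm (dvert_gt0 hz)) -normrM; congr `|_|.
by rewrite /graph_diff; field; rewrite gt_eqF ?dvert_gt0.
Qed.

Lemma graph_differentiable z : graph_dom z ->
  differentiable graph z /\ ('d graph z : 'rV[R]_n -> R) = graph_diff z.
Proof.
move=> hz; pose L : {linear 'rV[R]_n -> R} :=
  HB.pack (graph_diff z) (GRing.isLinear.Build _ _ _ _ _ (graph_diff_linear z)).
apply: (@differentiable_approx _ _ _ _ L); first exact: graph_diff_continuous.
move=> eps eps_gt0; have g_gt0 := grad_norm_gt0; have dv := dvert_ge hz.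
have n1_gt0 : 0 < n%:R + 1 :> R by rewrite ltr_wpDl ?ler0n.
set eps1 := eps * g / (4 * (n%:R + 1)).
have eps1_gt0 : 0 < eps1 by rewrite /eps1 !divr_gt0 ?mulr_gt0.
have /eqaddoP /(_ eps1 eps1_gt0) /nbhs_norm0P [r r_gt0 Phi_o] :=
  diff_locally (Phi_diff (graph_pt z)).
have [e e_gt0 ball_e] := graph_dom_ball hz.
apply/nbhs_norm0P; exists (Num.min (r / (2 * (n%:R + 1))) (e / (n%:R + 1))).
  by rewrite /= lt_min !divr_gt0 ?mulr_gt0.
move=> h /=; rewrite lt_min !ltr_pdivlMr ?mulr_gt0 // => /andP [hr he].
have hhz : graph_dom (h + z).
  apply: ball_e; rewrite addrK; apply: le_lt_trans (enorm_le_mx_norm _) _.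
  by have := normr_ge0 h; nra.
have k_le := graph_increment_le hz hhz.
have /(_ (le_lt_trans k_le _)) := Phi_o (vpt (graph (h + z) - graph z) h *m Q).
rewrite -graph_remainder // => /(_ ltac:(nra)) rem_le.
rewrite -(ler_pM2l (dvert_gt0 hz)); apply: le_trans rem_le _.
apply: le_trans (ler_wpM2l (ltW eps1_gt0) k_le) _.
have -> : eps1 * (2 * (n%:R + 1) * `|h|) = eps * (g / 2) * `|h|.
  by rewrite /eps1; field; rewrite gt_eqF.
by have := mulr_ge0 (ltW eps_gt0) (normr_ge0 h); nra.
Qed.

Lemma grad_graph z : graph_dom z -> grad graph z = - (dvert z)^-1 *: dhor z.
Proof.
move=> /graph_differentiable [f_diff dfE]; apply/rowP => i.
rewrite /grad mxE [RHS]mxE deriveE // dfE /graph_diff dot_delta_mx.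
by rewrite mulrC mulNr mulrN.
Qed.

Lemma graph_pt_lipschitz z1 z2 : graph_dom z1 -> graph_dom z2 ->
  enorm (graph_pt z1 - graph_pt z2) <= 2 * enorm (z1 - z2).
Proof.
move=> /graphP [in1 P1] /graphP [in2 P2].
rewrite /graph_pt opprD addrACA subrr add0r -mulmxBl vptB enorm_orthomx //.
by apply: le_trans (enorm_vpt_le _ _) _; have := zeros_lipschitz in2 in1 P2 P1; lra.
Qed.

Hypothesis gamma_lt1 : gamma < 1.

Lemma grad_Phi_graph_holder z1 z2 : graph_dom z1 -> graph_dom z2 ->
  enorm (grad Phi (graph_pt z1) - grad Phi (graph_pt z2)) <=
  S * (2 * enorm (z1 - z2) `^ gamma).
Proof.
move=> h1 h2; apply: le_trans (S_bound _ _) _; rewrite ler_wpM2l //.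
apply: (@le_trans _ _ ((2 * enorm (z1 - z2)) `^ gamma)).
  apply: (ge0_ler_powR (ltW gamma_gt0)); rewrite ?nnegrE ?mulr_ge0 ?enorm_ge0 //.
  exact: graph_pt_lipschitz.
rewrite powRM ?enorm_ge0 // ler_wpM2r ?powR_ge0 //.
have : (2 : R) `^ gamma <= 2 `^ 1 by apply: ler_powR; [rewrite ler1n | exact: ltW].
by rewrite powRr1.
Qed.

Let QT_orth : Q^T *m Q^T^T = 1%:M.
Proof. by rewrite trmxK; apply: mulmx1C. Qed.

Lemma grad_graph_holder z1 z2 : graph_dom z1 -> graph_dom z2 ->
  enorm (grad graph z1 - grad graph z2) <= (16 * S / g) * enorm (z1 - z2) `^ gamma.
Proof.
move=> h1 h2; rewrite (grad_graph h1) (grad_graph h2).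
have g_gt0 := grad_norm_gt0.
have A_gt0 := dvert_gt0 h1; have B_gt0 := dvert_gt0 h2.
set A := dvert z1 in A_gt0 *; set B := dvert z2 in B_gt0 *.
set D := enorm (grad Phi (graph_pt z1) - grad Phi (graph_pt z2)).
have rot_gradB : enorm (rot_grad z1 - rot_grad z2) = D.
  by rewrite /rot_grad -mulmxBl enorm_orthomx ?QT_orth.
have dhorB : enorm (dhor z1 - dhor z2) <= D.
  by rewrite -rot_gradB /dhor -raddfB; apply: enorm_rsubmx.
have dvertB : `|B - A| <= D.
  rewrite -rot_gradB distrC /A /B /dvert (_ : forall u v : 'rV[R]_1, u 0 0 - v 0 0 = (u - v) 0 0).
    by rewrite -raddfB; apply: abs_lsubmx_le_enorm.
  by move=> u v; rewrite !mxE.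
have dhor2 : enorm (dhor z2) <= 3 / 2 * g.
  apply: le_trans (enorm_rsubmx _) _; rewrite /rot_grad enorm_orthomx ?QT_orth //.
  exact/grad_norm_near_center/graph_pt_near.
have -> : - A^-1 *: dhor z1 - - B^-1 *: dhor z2 =
    - (A^-1 *: (dhor z1 - dhor z2) + ((B - A) / (A * B)) *: dhor z2).
  by apply/rowP => i; rewrite !mxE; field; rewrite (gt_eqF A_gt0) (gt_eqF B_gt0).
rewrite enormN; apply: le_trans (enormD _ _) _; rewrite !enormZ.
apply: le_trans (_ : _ <= 8 / g * D) _.
  by apply: ratio_variation_bound; rewrite ?enorm_ge0 ?dvert_ge.
have -> : 16 * S / g * enorm (z1 - z2) `^ gamma =
    8 / g * (S * (2 * enorm (z1 - z2) `^ gamma)) by field; rewrite gt_eqF.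
by rewrite ler_wpM2l ?divr_ge0 ?(ltW g_gt0) //; exact: grad_Phi_graph_holder.
Qed.

Lemma local_graph : exists (U : set 'rV[R]_n) (f : 'rV[R]_n -> R),
  open U /\ C1gamma_on U gamma f /\
  forall t z, enorm (vpt t z) < delta ->
    (Psi t z = 0 <-> U z /\ t = f z) /\ (Psi t z < 0 <-> t < f z).
Proof.
exists graph_dom, graph; split; first exact: graph_dom_open.
split; last by move=> t z int; split; [exact: Psi_eq0 | exact: Psi_lt0].
split; first by move=> z /graph_differentiable [].
by exists (16 * S / g) => z1 z2; apply: grad_graph_holder.
Qed.

End LocalGraph.

Theorem lemma6p4 (R : realType) (n : nat) (hn : (1 <= n)%N)
  (gamma : R) (hg0 : 0 < gamma) (hg1 : gamma < 1)
  (D : set 'rV[R]_n.+1) (Phi : 'rV[R]_n.+1 -> R)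
  (hPhi : C1gamma_on setT gamma Phi)
  (hD : D = [set x | Phi x < 0])
  (hbd : closure D `\` interior D = [set x | Phi x = 0])
  (hgrad : forall x, Phi x = 0 -> grad Phi x != 0)
  (hconn : connected D)
  (hinf : 0 < grad_inf Phi)
  (delta : R) (hdelta : 0 < delta)
  (hcond : delta `^ gamma * (holder_semi gamma Phi / grad_inf Phi) <= 1 / 2) :
  forall x : 'rV[R]_n.+1, Phi x = 0 ->
  exists Q : 'M[R]_n.+1, Q *m Q^T = 1%:M /\ \det Q = 1 /\
  exists (U : set 'rV[R]_n) (f : 'rV[R]_n -> R),
    open U /\ C1gamma_on U gamma f /\
    forall (t : R) (z : 'rV[R]_n),
      enorm (row_mx (t%:M : 'rV[R]_1) z) < delta ->
      (Phi (x + row_mx (t%:M : 'rV[R]_1) z *m Q) = 0 <-> (U z /\ t = f z)) /\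
      (Phi (x + row_mx (t%:M : 'rV[R]_1) z *m Q) < 0 <-> t < f z).
Proof.
move=> x Phi_x; have [Phi_diff [H Phi_holder]] := hPhi.
have g_gt0 : 0 < enorm (grad Phi x) := lt_le_trans hinf (grad_inf_le Phi_x).
set u := (enorm (grad Phi x))^-1 *: grad Phi x.
have u_unit : dot u u = 1.
  by rewrite dotZl dotZr -enorm_sq mulrA -expr2 -exprMn mulVf ?expr1n ?gt_eqF.
have [Q [Q_orth [Q_det Q_e0]]] := rotation_e0 hn u_unit.
exists Q; do 2!split => //.
exact: (local_graph hg0 (fun y => Phi_diff y I) (fun y1 y2 => Phi_holder y1 y2 I I) Phi_x
  hdelta hinf hcond Q_orth Q_e0 hg1).
Qed.
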